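(* Let $\mathcal O$ be any quantum algorithm (unitary, using no measurements) such that for every $x$, $\mathcal O\ket{x}\ket{\mathbf 0}=\ket{x}\ket{\Psi_x}=\ket{x}(\ket{\Psi_x^1}+\ket{\Psi_x^0})$, and let $\chi:\mathbb Z\to\{0,1\}$ be a Boolean function such that $\ket{\Psi_x^1}$ (the good part) and $\ket{\Psi_x^0}$ (the bad part) are the components of $\ket{\Psi_x}$ on computational basis states $\ket{z}$ with $\chi(z)=1$ and $\chi(z)=0$ respectively, where $\sin^2(\theta_x)=\langle\Psi_x^1|\Psi_x^1\rangle$ with $0<\theta_x\le\pi/2$ for every $x$. Let $M\ge1$ be an integer. Then there exists a quantum algorithm $Par\_Est\_Zero(\mathcal O,\chi,M)$ that maps $\ket{x}\ket{\mathbf 0}\ket{0}\mapsto\ket{x}\otimes\big(\alpha_x\ket{u_x}\ket{1}+\beta_x\ket{u'_x}\ket{0}\big)$ (with normalized states $\ket{u_x},\ket{u'_x}$), where for every $x$, $|\alpha_x|^2=\dfrac{\sin^2(M\theta_x)}{M^2\sin^2(\theta_x)}$. It uses $\mathcal O$ and its inverse $O(M)$ times. *)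

From HB Require Import structures.
From mathcomp Require Import all_boot all_order all_algebra.
From mathcomp Require Import all_classical all_reals.
From mathcomp Require Import trigo.
From mathcomp Require Import complex.
Set Implicit Arguments. Unset Strict Implicit. Unset Printing Implicit Defensive.
Import Order.TTheory GRing.Theory Num.Theory.
Local Open Scope ring_scope.

Definition qstate (R : realType) (T : finType) := T -> R[i].
Definition qop (R : realType) (T : finType) := T -> T -> R[i].

Definition qapply (R : realType) (T : finType) (U : qop R T) (v : qstate R T)
  : qstate R T := fun i => \sum_(j : T) U i j * v j.

(* U^dagger U = I  (for finite dimensions this is unitarity). *)
Definition unitary (R : realType) (T : finType) (U : qop R T) : Prop :=
  forall i j : T, \sum_(k : T) (U k i)^* * U k j = (i == j)%:R.

Definition adjoint (R : realType) (T : finType) (U : qop R T) : qop R T :=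
  fun i j => (U j i)^*.

Definition ket (R : realType) (T : finType) (b : T) : qstate R T :=
  fun i => (i == b)%:R.

Definition sqnorm (R : realType) (T : finType) (v : qstate R T) : R[i] :=
  \sum_(i : T) `|v i| ^+ 2.

(*   work register   |z>,  z : 'I_N.+1   (|0> is ord0) -- acted on by O    *)
(*   extra ancilla   |a>,  a : 'I_K.+1   (|0> is ord0), free workspace     *)
(*   output qubit    |b>,  b : bool      (true = |1>, false = |0>)         *)

Definition oreg (n N : nat) : finType := ('I_n * 'I_N.+1)%type.
Definition areg (K : nat) : finType := ('I_K.+1 * bool)%type.
Definition sysreg (n N K : nat) : finType := (oreg n N * areg K)%type.

(* One step of a quantum query algorithm: either a fixed (O-independent)  *)
(* operator on the whole system, or a use of O or of its inverse O^-1,    *)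
(* possibly controlled by the ancilla/output registers: the query is      *)
(* applied on the branch of those basis states c with ctrl c = true, and  *)
(* the identity is applied elsewhere (ctrl = predT gives a plain query).  *)
Inductive qstep (R : realType) (n N K : nat) :=
| Fixed of qop R (sysreg n N K)
| Query of (areg K -> bool) & bool (* true: use O^-1 *).

Definition query_gate (R : realType) (n N K : nat) (O : qop R (oreg n N))
    (ctrl : areg K -> bool) (inv : bool) : qop R (sysreg n N K) :=
  fun i j =>
    if i.2 == j.2 then
      (if ctrl j.2 then (if inv then adjoint O else O) i.1 j.1
       else (i.1 == j.1)%:R)
    else 0.

Definition step_gate (R : realType) (n N K : nat) (O : qop R (oreg n N))
    (s : qstep R n N K) : qop R (sysreg n N K) :=
  match s with
  | Fixed U => U
  | Query ctrl inv => query_gate O ctrl inv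
  end.

Definition run (R : realType) (n N K : nat) (O : qop R (oreg n N))
    (alg : seq (qstep R n N K)) (v : qstate R (sysreg n N K))
  : qstate R (sysreg n N K) :=
  foldl (fun w s => qapply (step_gate O s) w) v alg.

Definition fixed_unitary (R : realType) (n N K : nat) (s : qstep R n N K) : Prop :=
  match s with
  | Fixed U => unitary U
  | Query _ _ => True
  end.

Definition nqueries (R : realType) (n N K : nat) (alg : seq (qstep R n N K)) : nat :=
  count (fun s => if s is Query _ _ then true else false) alg.

Definition oracle_prepares (R : realType) (n N : nat) (O : qop R (oreg n N))
    (Psi : 'I_n -> qstate R 'I_N.+1) : Prop :=
  forall (x : 'I_n) (y : 'I_n) (z : 'I_N.+1),
    O (y, z) (x, ord0) = (y == x)%:R * Psi x z.

Definition good_weight (R : realType) (N : nat) (chi : 'I_N.+1 -> bool)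
    (psi : qstate R 'I_N.+1) : R[i] :=
  \sum_(z : 'I_N.+1 | chi z) `|psi z| ^+ 2.

(* every fixed step of the algorithm is unitary (no measurements) *)
Definition alg_unitary (R : realType) (n N K : nat) (alg : seq (qstep R n N K)) : Prop :=
  foldr (fun s P => fixed_unitary s /\ P) True alg.

Definition init_state (R : realType) (n N K : nat) (x : 'I_n)
  : qstate R (sysreg n N K) := @ket R (sysreg n N K) ((x, ord0), (ord0, false)).

Definition out_state (R : realType) (n N K : nat) (x : 'I_n)
    (alpha beta : R[i]) (u u' : qstate R ('I_N.+1 * 'I_K.+1)%type)
  : qstate R (sysreg n N K) :=
  fun i => if i.1.1 == x then
             (if i.2.2 then alpha * u (i.1.2, i.2.1) else beta * u' (i.1.2, i.2.1))
           else 0.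

(* An ancilla register 'I_M is first put in the uniform superposition (by a
   Householder reflection sending |0> to minus the uniform vector).  Round k,
   for 1 <= k < M, applies one Grover iterate O S_0 O^-1 S_chi on the branches
   where the ancilla value a satisfies k <= a, so branch a ends up holding
   G^a Psi_x.  Undoing the superposition and flagging the ancilla value 0 in
   the output qubit leaves (1/M) sum_(a < M) G^a Psi_x on the flagged part.
   On the span of the good and bad parts G is the rotation by 2 theta, so
   G^a Psi_x = sin((2a+1) theta)/sin theta good + cos((2a+1) theta)/cos theta bad,
   and summing the odd multiples of theta gives the squared norm
   sin^2(M theta) / (M^2 sin^2 theta).  The circuit makes 2M - 1 queries. *)

From HB Require Import structures.
From mathcomp Require Import all_boot all_order all_algebra.
From mathcomp Require Import all_classical all_reals.
From mathcomp Require Import trigo.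
From mathcomp Require Import complex.
From mathcomp Require Import ring lra zify.
Import Order.TTheory GRing.Theory Num.Theory.
Set Implicit Arguments. Unset Strict Implicit. Unset Printing Implicit Defensive.
Local Open Scope ring_scope.

Section StatesAndOperators.
Variable R : realType.
Local Notation C := R[i].

Lemma big_pairE (I J : finType) (F : I * J -> C) :
  \sum_(p : I * J) F p = \sum_(i : I) \sum_(j : J) F (i, j).
Proof. by rewrite pair_bigA; apply: eq_bigr => -[]. Qed.

Lemma big_deltal (I : finType) (i0 : I) (F : I -> C) :
  \sum_(j : I) (j == i0)%:R * F j = F i0.
Proof.
rewrite (bigD1 i0) //= eqxx mul1r big1 ?addr0 // => j /negbTE ->.
by rewrite mul0r.
Qed.

Lemma big_deltar (I : finType) (i0 : I) (F : I -> C) :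
  \sum_(j : I) (i0 == j)%:R * F j = F i0.
Proof. by rewrite -[RHS](big_deltal i0); apply: eq_bigr => j _; rewrite eq_sym. Qed.

Lemma natr_andb (a b : bool) : ((a && b)%:R : C) = a%:R * b%:R.
Proof. by case: a; case: b; rewrite ?mul1r ?mul0r. Qed.

Lemma unitary_orthonormal_rows (T : finType) (U : qop R T) : unitary U ->
  forall i k, \sum_j U i j * (U k j)^* = (i == k)%:R.
Proof.
move=> HU i k.
pose A : 'M[C]_#|T| := \matrix_(a, b) U (enum_val a) (enum_val b).
pose B : 'M[C]_#|T| := \matrix_(a, b) (U (enum_val b) (enum_val a))^*.
have reindex_enum (F : T -> C) : \sum_t F t = \sum_(a < #|T|) F (enum_val a).
  by rewrite (reindex (@enum_val T T)) //=; exists (@enum_rank T) => t _;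
    [exact: enum_valK | exact: enum_rankK].
have BA : B *m A = 1%:M.
  apply/matrixP => a b; rewrite !mxE -(inj_eq enum_val_inj) -HU reindex_enum.
  by apply: eq_bigr => c _; rewrite !mxE.
have /matrixP/(_ (enum_rank i) (enum_rank k)) := mulmx1C BA.
rewrite !mxE (inj_eq enum_rank_inj) => <-.
by rewrite reindex_enum; apply: eq_bigr => a _; rewrite !mxE !enum_rankK.
Qed.

Definition id_tensor (T1 T2 : finType) (U : qop R T2) : qop R (T1 * T2)%type :=
  fun i j => (i.1 == j.1)%:R * U i.2 j.2.

Definition tensor_id (T1 T2 : finType) (U : qop R T1) : qop R (T1 * T2)%type :=
  fun i j => U i.1 j.1 * (i.2 == j.2)%:R.

Definition diag_op (T : finType) (d : T -> C) : qop R T :=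
  fun i j => (i == j)%:R * d j.

Definition perm_op (T : finType) (f : T -> T) : qop R T :=
  fun i j => (i == f j)%:R.

Lemma unitary_id_tensor (T1 T2 : finType) (U : qop R T2) :
  unitary U -> unitary (id_tensor U : qop R (T1 * T2)%type).
Proof.
move=> HU [i1 i2] [j1 j2]; rewrite big_pairE /id_tensor /= xpair_eqE natr_andb.
under eq_bigr do under eq_bigr do rewrite rmorphM rmorph_nat mulrACA -natrM mulnb.
under eq_bigr do rewrite -big_distrr /= HU natr_andb -mulrA.
by rewrite big_deltal.
Qed.

Lemma unitary_tensor_id (T1 T2 : finType) (U : qop R T1) :
  unitary U -> unitary (tensor_id U : qop R (T1 * T2)%type).
Proof.
move=> HU [i1 i2] [j1 j2]; rewrite big_pairE exchange_big /tensor_id /=.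
rewrite xpair_eqE natr_andb.
under eq_bigr do under eq_bigr do rewrite rmorphM rmorph_nat mulrACA -natrM mulnb.
under eq_bigr do rewrite -big_distrl /= HU mulrC natr_andb -mulrA.
by rewrite big_deltal mulrC.
Qed.

Lemma unitary_diag_op (T : finType) (d : T -> C) :
  (forall j, (d j)^* * d j = 1) -> unitary (diag_op d).
Proof.
move=> Hd i j; rewrite /diag_op.
under eq_bigr do rewrite rmorphM rmorph_nat mulrACA -mulrA.
by rewrite big_deltal; case: eqP => [->|]; rewrite ?Hd ?mul1r ?mul0r.
Qed.

Lemma unitary_sign_diag_op (T : finType) (d : T -> C) :
  (forall j, d j = 1 \/ d j = -1) -> unitary (diag_op d).
Proof.
move=> Hd; apply: unitary_diag_op => j.
by case: (Hd j) => ->; rewrite ?rmorph1 ?mulr1 // rmorphN1 mulrNN mulr1.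
Qed.

Lemma unitary_perm_op (T : finType) (f : T -> T) :
  injective f -> unitary (perm_op f).
Proof.
move=> Hf i j; rewrite /perm_op.
by under eq_bigr do rewrite rmorph_nat; rewrite big_deltal (inj_eq Hf).
Qed.

Lemma qapply_id_tensor (T1 T2 : finType) (U : qop R T2) (v : qstate R (T1 * T2)%type) i :
  qapply (id_tensor U) v i = \sum_(j2 : T2) U i.2 j2 * v (i.1, j2).
Proof.
rewrite /qapply big_pairE /id_tensor.
under eq_bigr do under eq_bigr do rewrite /= -mulrA.
under eq_bigr do rewrite -big_distrr.
exact: (big_deltar i.1 (fun i1 => \sum_j2 U i.2 j2 * v (i1, j2))).
Qed.

Lemma qapply_tensor_id (T1 T2 : finType) (U : qop R T1) (v : qstate R (T1 * T2)%type) i :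
  qapply (tensor_id U) v i = \sum_(j1 : T1) U i.1 j1 * v (j1, i.2).
Proof.
rewrite /qapply big_pairE /tensor_id; apply: eq_bigr => j1 _.
under eq_bigr do rewrite /= -mulrA.
by rewrite -big_distrr /= (big_deltar i.2 (fun j2 => v (j1, j2))).
Qed.

Lemma qapply_diag_op (T : finType) (d : T -> C) v i :
  qapply (diag_op d) v i = d i * v i.
Proof. by rewrite /qapply /diag_op; under eq_bigr do rewrite -mulrA; rewrite big_deltar. Qed.

Lemma qapply_perm_op (T : finType) (f : T -> T) v i :
  involutive f -> qapply (perm_op f) v i = v (f i).
Proof.
move=> Hf; rewrite /qapply /perm_op -(big_deltal (f i) v).
by apply: eq_bigr => j _; rewrite eq_sym (can2_eq Hf Hf).
Qed.

Lemma sqnorm_ge0 (T : finType) (v : qstate R T) : 0 <= sqnorm v.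
Proof. by apply: sumr_ge0 => c _; rewrite exprn_ge0. Qed.

Lemma sqnorm_eq0 (T : finType) (v : qstate R T) : sqnorm v = 0 -> v = (fun=> 0).
Proof.
move=> /psumr_eq0P v0; apply: funext => c; apply/eqP.
have /eqP := v0 (fun i _ => exprn_ge0 2 (normr_ge0 (v i))) c isT.
by rewrite expf_eq0 /= normr_eq0.
Qed.

Lemma sqnorm_ket (T : finType) (b : T) : sqnorm (ket R b) = 1.
Proof.
rewrite /sqnorm (bigD1 b) //= /ket eqxx normr1 expr1n big1 ?addr0 //.
by move=> c /negbTE ->; rewrite normr0 expr0n.
Qed.

Lemma normalize_state (T : finType) (v : qstate R T) : T ->
  exists (a : C) (u : qstate R T),
    sqnorm u = 1 /\ v = (fun c => a * u c) /\ `|a| ^+ 2 = sqnorm v.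
Proof.
move=> b; set s := sqnorm v.
have [s0|sN0] := eqVneq s 0.
  exists 0, (ket R b); rewrite sqnorm_ket normr0 expr0n s0 (sqnorm_eq0 s0).
  by do 2 split => //; apply: funext => c; rewrite mul0r.
have rN0 : sqrtC s != 0 by rewrite sqrtC_eq0.
have normr_sqrt : `|sqrtC s| ^+ 2 = s by rewrite ger0_norm ?sqrtC_ge0 ?sqnorm_ge0 ?sqrtCK.
exists (sqrtC s), (fun c => v c / sqrtC s); split; last split => //.
  rewrite /sqnorm; under eq_bigr do rewrite normrM normfV exprMn exprVn normr_sqrt.
  by rewrite -big_distrl /= divff.
by apply: funext => c; rewrite mulrC divfK.
Qed.

End StatesAndOperators.

Arguments perm_op {R T} f.

Section Circuits.
Variables (R : realType) (n N K : nat).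
Local Notation C := R[i].
Local Notation sys := (sysreg n N K).

Lemma qapply_query_gate (O : qop R (oreg n N)) (ctrl : areg K -> bool) inv
    (v : qstate R sys) i :
  qapply (query_gate O ctrl inv) v i =
  if ctrl i.2 then \sum_j (if inv then adjoint O else O) i.1 j * v (j, i.2)
  else v i.
Proof.
rewrite /qapply big_pairE /query_gate.
under eq_bigr => j1 _.
  rewrite (bigD1 i.2) //= eqxx big1 ?addr0; last first.
    by move=> j2 /negbTE; rewrite eq_sym => ->; rewrite mul0r.
over.
case: (ctrl i.2) => //=.
by under eq_bigr do rewrite eq_sym; rewrite big_deltal -surjective_pairing.
Qed.

Lemma run_cat (O : qop R (oreg n N)) (s1 s2 : seq (qstep R n N K)) v :
  run O (s1 ++ s2) v = run O s2 (run O s1 v).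
Proof. by rewrite /run foldl_cat. Qed.

Lemma alg_unitary_cat (s1 s2 : seq (qstep R n N K)) :
  alg_unitary s1 -> alg_unitary s2 -> alg_unitary (s1 ++ s2).
Proof. by elim: s1 => //= s s1 IH [H1 H2] H; split => //; apply: IH. Qed.

Lemma out_state_decomp (x : 'I_n) (v : qstate R sys) :
  (forall i, i.1.1 != x -> v i = 0) ->
  exists (a b : C) (u u' : qstate R ('I_N.+1 * 'I_K.+1)%type),
    sqnorm u = 1 /\ sqnorm u' = 1 /\ v = out_state x a b u u' /\
    `|a| ^+ 2 = sqnorm (fun c : 'I_N.+1 * 'I_K.+1 => v ((x, c.1), (c.2, true))).
Proof.
move=> v0.
have [a [u [u1 [vu au]]]] := normalize_state
  (fun c : 'I_N.+1 * 'I_K.+1 => v ((x, c.1), (c.2, true))) (ord0, ord0).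
have [b [u' [u'1 [vu' _]]]] := normalize_state
  (fun c : 'I_N.+1 * 'I_K.+1 => v ((x, c.1), (c.2, false))) (ord0, ord0).
exists a, b, u, u'; do 3 split => //.
apply: funext => -[[y z] [c e]]; rewrite /out_state /=.
have [->|yx] := eqVneq y x; last by rewrite v0.
by case: e; [move: vu | move: vu'] => /(congr1 (@^~ (z, c))).
Qed.

End Circuits.

Section Oracle.
Variables (R : realType) (n N : nat).
Variables (O : qop R (oreg n N)) (Psi : 'I_n -> qstate R 'I_N.+1).
Hypotheses (O_unitary : unitary O) (O_prepares : oracle_prepares O Psi).
Local Notation C := R[i].

Definition ord0_phase (j : oreg n N) : C := if j.2 == ord0 then -1 else 1.

Lemma oracle_ord0 i y : O i (y, ord0) = (i.1 == y)%:R * Psi y i.2.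
Proof. by case: i; exact: O_prepares. Qed.

Lemma adjoint_oracle_ord0 (w : qstate R (oreg n N)) y :
  qapply (adjoint O) w (y, ord0) = \sum_z (Psi y z)^* * w (y, z).
Proof.
rewrite /qapply /adjoint big_pairE.
under eq_bigr do under eq_bigr do rewrite oracle_ord0 rmorphM rmorph_nat -mulrA.
by under eq_bigr do rewrite -big_distrr; rewrite big_deltal.
Qed.

Lemma dot_Psi_self y : \sum_z (Psi y z)^* * Psi y z = 1.
Proof.
transitivity (\sum_k (O k (y, ord0))^* * O k (y, ord0)); last first.
  by rewrite O_unitary eqxx.
have := adjoint_oracle_ord0 (fun k => O k (y, ord0)) y; rewrite /qapply /adjoint => ->.
by under [RHS]eq_bigr do rewrite /= oracle_ord0 eqxx mul1r.
Qed.

Lemma oracle_adjointK w : qapply O (qapply (adjoint O) w) = w.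
Proof.
apply: funext => i; rewrite /qapply /adjoint.
under eq_bigr do rewrite big_distrr /=.
rewrite exchange_big /=.
under eq_bigr do under eq_bigr do rewrite mulrA.
under eq_bigr do rewrite -big_distrl /=.
under eq_bigr do rewrite unitary_orthonormal_rows // eq_sym.
by rewrite big_deltal.
Qed.

Lemma oracle_project_ord0 (v : qstate R (oreg n N)) i :
  \sum_j O i j * ((j.2 == ord0)%:R * v j) = Psi i.1 i.2 * v (i.1, ord0).
Proof.
rewrite big_pairE.
under eq_bigr do under eq_bigr do rewrite mulrCA.
under eq_bigr do rewrite big_deltal oracle_ord0 -mulrA.
by rewrite big_deltar.
Qed.

Lemma oracle_reflection w i :
  qapply O (qapply (diag_op ord0_phase) (qapply (adjoint O) w)) i =
  w i - 2 * Psi i.1 i.2 * \sum_z (Psi i.1 z)^* * w (i.1, z).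
Proof.
set v := qapply (adjoint O) w.
transitivity (\sum_j O i j * qapply (diag_op ord0_phase) v j) => //.
transitivity (qapply O v i - 2 * \sum_j O i j * ((j.2 == ord0)%:R * v j)).
  rewrite [qapply O v i]/qapply big_distrr -sumrB.
  apply: eq_bigr => j _; rewrite qapply_diag_op /ord0_phase.
  by case: (j.2 == ord0) => /=; ring.
by rewrite /v oracle_adjointK oracle_project_ord0 adjoint_oracle_ord0 mulrA.
Qed.

End Oracle.

Arguments ord0_phase {R n N} j.

Section GroverStep.
Variable K : comNzRingType.

Definition grover_step (s : K) (pq : K * K) : K * K :=
  (pq.1 * (1 - 2 * s) + 2 * pq.2 * (1 - s), pq.2 * (1 - 2 * s) - 2 * pq.1 * s).

Definition grover_coef (s : K) (j : nat) : K * K := iter j (grover_step s) (1, 1).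

End GroverStep.

Lemma iter_grover_step_rmorph (K L : comNzRingType) (f : {rmorphism K -> L}) s c j :
  iter j (grover_step (f s)) (c, c) =
  (c * f (grover_coef s j).1, c * f (grover_coef s j).2).
Proof.
elim: j => [|j IH]; first by rewrite /= rmorph1 mulr1.
rewrite /grover_coef !iterS IH -/(grover_coef s j) /grover_step /=.
by rewrite !(rmorphB, rmorphD, rmorphM, rmorph_nat, rmorph1); congr pair; ring.
Qed.

Section GroverSpan.
Variables (R : realType) (n N : nat) (chi : 'I_N.+1 -> bool).
Variables (O : qop R (oreg n N)) (Psi : 'I_n -> qstate R 'I_N.+1) (x : 'I_n).
Hypotheses (O_unitary : unitary O) (O_prepares : oracle_prepares O Psi).
Local Notation C := R[i].
Local Notation s2 := (good_weight chi (Psi x)).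

Definition good_part (z : 'I_N.+1) : C := if chi z then Psi x z else 0.
Definition bad_part (z : 'I_N.+1) : C := if chi z then 0 else Psi x z.

Definition span_state (pq : C * C) : qstate R (oreg n N) :=
  fun i => (i.1 == x)%:R * (pq.1 * good_part i.2 + pq.2 * bad_part i.2).

Definition bad_phase (j : oreg n N) : C := if chi j.2 then 1 else -1.

Lemma Psi_good_bad z : Psi x z = good_part z + bad_part z.
Proof. by rewrite /good_part /bad_part; case: (chi z); rewrite ?addr0 ?add0r. Qed.

Lemma dot_Psi_good : \sum_z (Psi x z)^* * good_part z = s2.
Proof.
rewrite /good_weight [RHS]big_mkcond /=; apply: eq_bigr => z _.
by rewrite /good_part; case: (chi z); rewrite ?mulr0 // normCKC.
Qed.

Lemma dot_Psi_bad : \sum_z (Psi x z)^* * bad_part z = 1 - s2.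
Proof.
rewrite -(dot_Psi_self O_unitary O_prepares x) -dot_Psi_good -sumrB.
by apply: eq_bigr => z _; rewrite -mulrBr; congr (_ * _); rewrite Psi_good_bad addrC addKr.
Qed.

Lemma sqnorm_good_part : \sum_z `|good_part z| ^+ 2 = s2.
Proof.
rewrite /good_weight [RHS]big_mkcond /=; apply: eq_bigr => z _.
by rewrite /good_part; case: (chi z); rewrite ?normr0 ?expr0n.
Qed.

Lemma sqnorm_bad_part : \sum_z `|bad_part z| ^+ 2 = 1 - s2.
Proof.
rewrite -(dot_Psi_self O_unitary O_prepares x) -sqnorm_good_part -sumrB.
apply: eq_bigr => z _; rewrite -normCKC /good_part /bad_part.
by case: (chi z); rewrite normr0 expr0n /= ?subrr ?subr0.
Qed.

Lemma sqnorm_good_bad_comb (a b : C) :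
  \sum_z `|a * good_part z + b * bad_part z| ^+ 2 = `|a| ^+ 2 * s2 + `|b| ^+ 2 * (1 - s2).
Proof.
rewrite -sqnorm_bad_part -sqnorm_good_part !big_distrr -big_split /=.
apply: eq_bigr => z _; rewrite /good_part /bad_part.
by case: (chi z); rewrite !(mulr0, addr0, add0r, normr0, expr0n) /= ?addr0 ?add0r normrM exprMn.
Qed.

Lemma grover_span pq :
  qapply O (qapply (diag_op ord0_phase)
    (qapply (adjoint O) (qapply (diag_op bad_phase) (span_state pq)))) =
  span_state (grover_step s2 pq).
Proof.
have -> : qapply (diag_op bad_phase) (span_state pq) = span_state (pq.1, - pq.2).
  apply: funext => i; rewrite qapply_diag_op /bad_phase /span_state /good_part /bad_part.
  by case: (chi i.2) => /=; ring.
apply: funext => -[y z]; rewrite (oracle_reflection O_unitary O_prepares) /= /span_state /=.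
have [->|/negbTE y_x] := eqVneq y x; last first.
  by rewrite big1 => [|z' _]; rewrite !(mul0r, mulr0, subr0).
under eq_bigr do rewrite mul1r mulrDr (mulrCA _ pq.1) (mulrCA _ (- pq.2)).
rewrite big_split -!big_distrr /= dot_Psi_good dot_Psi_bad Psi_good_bad.
by rewrite /grover_step /=; ring.
Qed.

End GroverSpan.

Arguments bad_phase {R n N} chi j.

Section Trigonometry.
Variable R : realType.

(* The good and bad parts have norms [sin t] and [cos t], and the Grover
   iterate rotates their span by [2 t]. *)
Lemma grover_coef_sin_cos (t : R) j :
  (grover_coef (sin t ^+ 2) j).1 * sin t = sin ((2 * j + 1)%:R * t) /\
  (grover_coef (sin t ^+ 2) j).2 * cos t = cos ((2 * j + 1)%:R * t).
Proof.
elim: j => [|j [IHp IHq]]; first by rewrite /= !mul1r.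
rewrite /grover_coef iterS -/(grover_coef _ j) /grover_step /=.
set p := (grover_coef _ j).1 in IHp *; set q := (grover_coef _ j).2 in IHq *.
have -> : (2 * j.+1 + 1)%:R * t = (2 * j + 1)%:R * t + (t + t) :> R.
  by ring.
rewrite -cos2sin2 (_ : 1 - 2 * sin t ^+ 2 = cos t ^+ 2 - sin t ^+ 2); last first.
  by rewrite cos2sin2; ring.
by split; rewrite !(sinD, cosD) -IHp -IHq; ring.
Qed.

Lemma sum_sin_cos_odd (t : R) (M : nat) :
  (\sum_(j < M) sin ((2 * j + 1)%:R * t)) * sin t = sin (M%:R * t) ^+ 2 /\
  (\sum_(j < M) cos ((2 * j + 1)%:R * t)) * sin t = sin (M%:R * t) * cos (M%:R * t).
Proof.
elim: M => [|M [IHs IHc]]; first by rewrite !big_ord0 !mul0r sin0 expr0n mul0r.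
rewrite !big_ord_recr /= !mulrDl IHs IHc.
set u := M%:R * t.
have -> : (2 * M + 1)%:R * t = u + u + t by rewrite /u; ring.
have -> : M.+1%:R * t = u + t by rewrite /u; ring.
rewrite !(sinD, cosD); split.
  by rewrite -{1}[sin u ^+ 2]mulr1 -(cos2Dsin2 t); ring.
by rewrite -{1}[sin u * cos u]mulr1 -(cos2Dsin2 t); ring.
Qed.

Lemma grover_coef_mean (t : R) (M : nat) : sin t != 0 ->
  M%:R^-1 ^+ 2 * ((\sum_(j < M) (grover_coef (sin t ^+ 2) j).1) ^+ 2 * sin t ^+ 2
    + (\sum_(j < M) (grover_coef (sin t ^+ 2) j).2) ^+ 2 * (1 - sin t ^+ 2))
  = sin (M%:R * t) ^+ 2 / (M%:R ^+ 2 * sin t ^+ 2).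
Proof.
move=> st0; have [sum_sin sum_cos] := sum_sin_cos_odd t M.
have sumP : (\sum_(j < M) (grover_coef (sin t ^+ 2) j).1) * sin t =
              \sum_(j < M) sin ((2 * j + 1)%:R * t).
  by rewrite big_distrl; apply: eq_bigr => j _; exact: (grover_coef_sin_cos t j).1.
have sumQ : (\sum_(j < M) (grover_coef (sin t ^+ 2) j).2) * cos t =
              \sum_(j < M) cos ((2 * j + 1)%:R * t).
  by rewrite big_distrl; apply: eq_bigr => j _; exact: (grover_coef_sin_cos t j).2.
suff -> : (\sum_(j < M) (grover_coef (sin t ^+ 2) j).1) ^+ 2 * sin t ^+ 2
            + (\sum_(j < M) (grover_coef (sin t ^+ 2) j).2) ^+ 2 * (1 - sin t ^+ 2)
          = sin (M%:R * t) ^+ 2 / sin t ^+ 2 by rewrite mulrCA exprVn -invfM.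
rewrite -cos2sin2 -!exprMn sumP sumQ.
apply: (mulIf (expf_neq0 2 st0)); rewrite divfK ?expf_neq0 //.
rewrite mulrDl -!exprMn sum_sin sum_cos.
have := cos2Dsin2 (M%:R * t); set c := cos _; set u := sin _ => unit_circle.
by rewrite -[RHS]mulr1 -unit_circle; ring.
Qed.

End Trigonometry.

Section Householder.
Variables (R : realType) (T : finType) (w : T -> R[i]).

Definition householder : qop R T :=
  fun a b => (a == b)%:R - 2 * w a * w b / \sum_c w c * w c.

Lemma householderC a b : householder a b = householder b a.
Proof. by rewrite /householder eq_sym [2 * w a * w b]mulrAC. Qed.

Hypothesis w_real : forall a, w a \is Num.real.

Lemma householder_real a b : householder a b \is Num.real.
Proof.
by rewrite rpredB ?rpredM ?rpredV ?rpred_sum ?rpred_nat ?w_real // => c _; rewrite rpredM ?w_real.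
Qed.

Lemma unitary_householder : \sum_c w c * w c != 0 -> unitary householder.
Proof.
move=> w_neq0 i j; under eq_bigr do rewrite (conj_Creal (householder_real _ _)).
transitivity (\sum_k (k == i)%:R * (k == j)%:R
  - \sum_k (k == i)%:R * (2 * w k * w j / \sum_c w c * w c)
  - \sum_k (k == j)%:R * (2 * w k * w i / \sum_c w c * w c)
  + 4 * w i * w j / (\sum_c w c * w c) ^+ 2 * \sum_k w k * w k).
  rewrite big_distrr -!sumrB -big_split /=.
  by apply: eq_bigr => k _; rewrite /householder /=; field.
rewrite !big_deltal; field => //.
Qed.

End Householder.

Section UniformPreparation.
Variables (R : realType) (M' : nat).

Definition uniform_amp : R[i] := sqrtC (M'.+1%:R^-1).

Definition zero_to_uniform : qop R 'I_M'.+1 :=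
  householder (fun a => (a == ord0)%:R + uniform_amp).

Lemma uniform_amp_ge0 : 0 <= uniform_amp.
Proof. by rewrite sqrtC_ge0 invr_ge0 ler0n. Qed.

Lemma uniform_amp_sqr : uniform_amp ^+ 2 = M'.+1%:R^-1.
Proof. by rewrite sqrtCK. Qed.

Lemma uniform_amp1D_neq0 : 1 + uniform_amp != 0.
Proof. by rewrite lt0r_neq0 // ltr_pwDl // uniform_amp_ge0. Qed.

Lemma zero_to_uniform_norm :
  \sum_(a < M'.+1) ((a == ord0)%:R + uniform_amp) * ((a == ord0)%:R + uniform_amp)
  = 2 * (1 + uniform_amp).
Proof.
transitivity (\sum_(a < M'.+1) ((a == ord0)%:R * (1 + 2 * uniform_amp) + uniform_amp ^+ 2)).
  by apply: eq_bigr => a _; case: (a == ord0) => /=; ring.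
rewrite big_split /= big_deltal sumr_const card_ord uniform_amp_sqr.
by rewrite -[_ *+ M'.+1]mulr_natr mulVf ?pnatr_eq0 //; ring.
Qed.

Lemma unitary_zero_to_uniform : unitary zero_to_uniform.
Proof.
apply: unitary_householder => [a|].
  by rewrite ger0_real // addr_ge0 ?ler0n ?uniform_amp_ge0.
by rewrite zero_to_uniform_norm mulf_neq0 ?pnatr_eq0 ?uniform_amp1D_neq0.
Qed.

Lemma zero_to_uniformC a b : zero_to_uniform a b = zero_to_uniform b a.
Proof. exact: householderC. Qed.

Lemma zero_to_uniform_ord0 a : zero_to_uniform a ord0 = - uniform_amp.
Proof.
have := uniform_amp1D_neq0.
rewrite /zero_to_uniform /householder zero_to_uniform_norm eqxx /=.
by case: (a == ord0) => /= ?; field.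
Qed.

End UniformPreparation.

Arguments uniform_amp {R} M'.
Arguments zero_to_uniform {R} M'.

Section Algorithm.
Variables (R : realType) (n N : nat) (chi : 'I_N.+1 -> bool) (M' : nat).
Local Notation sys := (sysreg n N M').
Local Notation step := (qstep R n N M').
Local Notation query := (@Query R n N M').

Definition prepare_ancilla : qop R sys := id_tensor (tensor_id (zero_to_uniform M')).

Definition flag_ord0 (c : areg M') : areg M' := (c.1, c.2 (+) (c.1 == ord0)).

Definition flag_gate : qop R sys := id_tensor (perm_op flag_ord0).

Definition round_ctrl (k : nat) (c : areg M') : bool := (k <= c.1)%N.

Definition controlled_phase k (d : oreg n N -> R[i]) (i : sys) : R[i] :=
  if round_ctrl k i.2 then d i.1 else 1.

Definition round k : seq step :=
  [:: Fixed (diag_op (controlled_phase k (bad_phase chi)));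
      query (round_ctrl k) true;
      Fixed (diag_op (controlled_phase k ord0_phase));
      query (round_ctrl k) false].

Definition rounds : seq step := flatten [seq round k | k <- iota 1 M'].

Definition par_est_zero : seq step :=
  [:: query predT false; Fixed prepare_ancilla] ++ rounds ++
  [:: Fixed prepare_ancilla; Fixed flag_gate].

Lemma flag_ord0K : involutive flag_ord0.
Proof. by move=> [a b]; rewrite /flag_ord0 /= addbK. Qed.

Lemma unitary_controlled_phase k (d : oreg n N -> R[i]) :
  (forall j, d j = 1 \/ d j = -1) -> unitary (diag_op (controlled_phase k d)).
Proof.
by move=> d_sign; apply: unitary_sign_diag_op => i; rewrite /controlled_phase; case: ifP; auto.
Qed.

Lemma par_est_zero_unitary : alg_unitary par_est_zero.
Proof.
have prep_unitary : unitary prepare_ancilla.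
  exact/unitary_id_tensor/unitary_tensor_id/unitary_zero_to_uniform.
have flag_unitary : unitary flag_gate.
  exact/unitary_id_tensor/unitary_perm_op/(can_inj flag_ord0K).
apply: alg_unitary_cat => //; apply: alg_unitary_cat => //.
rewrite /rounds; elim: (iota 1 M') => //= k s IH; do !split => //.
  by apply: unitary_controlled_phase => j; rewrite /bad_phase; case: ifP; auto.
by apply: unitary_controlled_phase => j; rewrite /ord0_phase; case: ifP; auto.
Qed.

Lemma nqueries_par_est_zero : (nqueries par_est_zero <= 2 * M'.+1)%N.
Proof.
rewrite /nqueries /par_est_zero !count_cat /= /rounds.
have -> : forall s, count (fun s0 : step => if s0 is Query _ _ then true else false)
    (flatten [seq round k | k <- s]) = (2 * size s)%N.
  by elim => //= k s ->; lia.
by rewrite size_iota; lia.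
Qed.

End Algorithm.

Arguments prepare_ancilla {R n N M'}.
Arguments flag_gate {R n N M'}.
Arguments round {R n N} chi M' k.
Arguments par_est_zero {R n N} chi M'.

Section Execution.
Variables (R : realType) (n N : nat) (chi : 'I_N.+1 -> bool) (M' : nat).
Variables (O : qop R (oreg n N)) (Psi : 'I_n -> qstate R 'I_N.+1) (x : 'I_n).
Hypotheses (O_unitary : unitary O) (O_prepares : oracle_prepares O Psi).
Local Notation C := R[i].
Local Notation sys := (sysreg n N M').
Local Notation s2 := (good_weight chi (Psi x)).
Local Notation mu := (uniform_amp M').
Local Notation query := (@Query R n N M').

Definition coef_state (pq : areg M' -> C * C) : qstate R sys :=
  fun i => span_state chi Psi x (pq i.2) i.1.

Lemma run_round k pq :
  run O (round chi M' k) (coef_state pq) =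
  coef_state (fun c => if round_ctrl k c then grover_step s2 (pq c) else pq c).
Proof.
apply: funext => -[j c]; rewrite /run /= qapply_query_gate /=.
case: ifP => ctrl_c; last first.
  rewrite qapply_diag_op /controlled_phase ctrl_c mul1r qapply_query_gate ctrl_c.
  by rewrite qapply_diag_op /controlled_phase ctrl_c mul1r /coef_state ctrl_c.
rewrite /coef_state ctrl_c -(grover_span chi x O_unitary O_prepares) [qapply O _ j]/qapply.
apply: eq_bigr => j1 _; congr (_ * _).
rewrite !qapply_diag_op /controlled_phase ctrl_c qapply_query_gate ctrl_c /=.
congr (_ * _); rewrite [qapply (adjoint O) _ _]/qapply; apply: eq_bigr => j2 _.
by rewrite !qapply_diag_op /controlled_phase ctrl_c.
Qed.

Definition round_coef k (c : areg M') : C * C :=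
  if c.2 then (0, 0) else iter (minn c.1 k) (grover_step s2) (- mu, - mu).

Lemma run_prepare :
  run O [:: query predT false; Fixed prepare_ancilla] (init_state R x) =
  coef_state (round_coef 0).
Proof.
apply: funext => -[[y z] [a b]].
rewrite /run /= qapply_id_tensor /=.
transitivity (\sum_c tensor_id (zero_to_uniform M') (a, b) c *
                ((c == (ord0, false))%:R * O (y, z) (x, ord0))).
  apply: eq_bigr => c _; congr (_ * _).
  rewrite qapply_query_gate /= /init_state /ket.
  under eq_bigr do rewrite xpair_eqE natr_andb mulrCA.
  by rewrite big_deltal mulrC.
under eq_bigr do rewrite mulrCA.
rewrite big_deltal /tensor_id /= zero_to_uniform_ord0 O_prepares.
rewrite /coef_state /span_state /round_coef minn0 /= (Psi_good_bad chi).
by case: b => /=; ring.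
Qed.

Lemma run_rounds k :
  run O (flatten [seq round chi M' j | j <- iota 1 k]) (coef_state (round_coef 0)) =
  coef_state (round_coef k).
Proof.
elim: k => // k IH.
have -> : iota 1 k.+1 = iota 1 k ++ [:: k.+1] by rewrite -[in LHS](addn1 k) iotaD.
rewrite map_cat flatten_cat run_cat IH [flatten _]cats0 run_round.
congr coef_state; apply: funext => -[a b]; rewrite /round_coef /round_ctrl /=.
case: b => /=; first by case: ifP => _ //; rewrite /grover_step /=; congr pair; ring.
case: (leqP k.+1 a) => [lt_ka|le_ak].
  by rewrite (minn_idPr (ltnW lt_ka)).
by rewrite (minn_idPl _) // -ltnS.
Qed.

Lemma run_finish (v : qstate R sys) i :
  run O [:: Fixed prepare_ancilla; Fixed flag_gate] v i =
  \sum_a zero_to_uniform M' (flag_ord0 i.2).1 a * v (i.1, (a, (flag_ord0 i.2).2)).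
Proof.
rewrite /run /= /flag_gate qapply_id_tensor.
transitivity (qapply prepare_ancilla v (i.1, flag_ord0 i.2)).
  exact: (qapply_perm_op (fun c => qapply prepare_ancilla v (i.1, c)) i.2 (@flag_ord0K M')).
rewrite qapply_id_tensor.
exact: (qapply_tensor_id (zero_to_uniform M') (fun c => v (i.1, c)) (flag_ord0 i.2)).
Qed.

Lemma run_par_est_zero i :
  run O (par_est_zero chi M') (init_state R x) i =
  \sum_a zero_to_uniform M' (flag_ord0 i.2).1 a *
    coef_state (round_coef M') (i.1, (a, (flag_ord0 i.2).2)).
Proof. by rewrite /par_est_zero !run_cat run_prepare run_rounds run_finish. Qed.

Lemma output_off_input i : i.1.1 != x ->
  run O (par_est_zero chi M') (init_state R x) i = 0.
Proof.
move=> /negbTE i_x; rewrite run_par_est_zero big1 // => a _.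
by rewrite /coef_state /span_state /= i_x mul0r mulr0.
Qed.

Variable t : R.
Hypothesis good_weight_sin : s2 = (sin t ^+ 2)%:C%C.
Local Notation sumP := (\sum_(j < M'.+1) (grover_coef (sin t ^+ 2) j).1).
Local Notation sumQ := (\sum_(j < M'.+1) (grover_coef (sin t ^+ 2) j).2).

Lemma output_good_amplitude z a :
  run O (par_est_zero chi M') (init_state R x) ((x, z), (a, true)) =
  (a == ord0)%:R * (mu ^+ 2 * (sumP%:C%C * good_part chi Psi x z
                              + sumQ%:C%C * bad_part chi Psi x z)).
Proof.
rewrite run_par_est_zero /flag_ord0 /=.
have [->|a_neq0] := eqVneq a ord0; last first.
  rewrite mul0r big1 // => j _.
  by rewrite /coef_state /round_coef /span_state /= !mul0r addr0 !mulr0.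
rewrite mul1r !rmorph_sum !big_distrl -big_split big_distrr /=; apply: eq_bigr => j _.
rewrite zero_to_uniformC zero_to_uniform_ord0 /coef_state /round_coef /span_state /=.
rewrite eqxx mul1r (minn_idPl (leq_ord j)) good_weight_sin.
rewrite (iter_grover_step_rmorph (real_complex R)) /=.
by rewrite expr2; ring.
Qed.

End Execution.

Lemma normC_real_sqr (R : realType) (r : R) : `|r%:C%C| ^+ 2 = (r ^+ 2)%:C%C.
Proof.
have conj_r : (r%:C%C)^* = r%:C%C :> R[i] by exact: conjc_real.
by rewrite normCK conj_r -expr2 rmorphXn.
Qed.

Lemma normr_natb_sqr (R : realType) (b : bool) : `|(b%:R : R[i])| ^+ 2 = b%:R.
Proof. by case: b; rewrite ?normr0 ?normr1 ?expr0n ?expr1n. Qed.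

Lemma par_est_zero_correct (R : realType) (n N : nat) (chi : 'I_N.+1 -> bool) (M' : nat)
    (O : qop R (oreg n N)) (Psi : 'I_n -> qstate R 'I_N.+1) (x : 'I_n) (t : R) :
  unitary O -> oracle_prepares O Psi ->
  good_weight chi (Psi x) = (sin t ^+ 2)%:C%C -> sin t != 0 ->
  exists (alpha beta : R[i]) (u u' : qstate R ('I_N.+1 * 'I_M'.+1)%type),
    sqnorm u = 1 /\ sqnorm u' = 1 /\
    run O (par_est_zero chi M') (init_state R x) = out_state x alpha beta u u' /\
    `|alpha| ^+ 2 =
      (sin (M'.+1%:R * t) ^+ 2 / (M'.+1%:R ^+ 2 * sin t ^+ 2))%:C%C.
Proof.
move=> O_unitary O_prepares weight_sin sin_neq0.
have [a [b [u [u' [u1 [u'1 [run_out a_sqr]]]]]]] :=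
  out_state_decomp (v := run O (par_est_zero chi M') (init_state R x))
    (output_off_input chi O_unitary O_prepares).
exists a, b, u, u'; do 3 split => //.
rewrite a_sqr /sqnorm big_pairE.
under eq_bigr do under eq_bigr do rewrite (output_good_amplitude O_unitary O_prepares weight_sin).
under eq_bigr do under eq_bigr do rewrite /= normrM exprMn normr_natb_sqr.
under eq_bigr do rewrite big_deltal normrM exprMn.
rewrite -big_distrr /= (sqnorm_good_bad_comb chi x O_unitary O_prepares).
rewrite !normC_real_sqr weight_sin uniform_amp_sqr normfV normr_nat.
rewrite -grover_coef_mean //.
by rewrite !(rmorphM, rmorphD, rmorphN, rmorph1, rmorphXn, fmorphV, rmorph_nat); ring.
Qed.

Theorem lemma4 :
  exists c : nat,
  forall (R : realType) (n N : nat) (chi : 'I_N.+1 -> bool) (M : nat),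
    (1 <= M)%N ->
    exists (K : nat) (alg : seq (qstep R n N K)),
      alg_unitary alg /\
      (nqueries alg <= c * M)%N /\
      forall (O : qop R (oreg n N)) (Psi : 'I_n -> qstate R 'I_N.+1)
             (theta : 'I_n -> R),
        unitary O ->
        oracle_prepares O Psi ->
        (forall x, 0 < theta x <= pi / 2) ->
        (forall x, good_weight chi (Psi x) = ((sin (theta x) ^+ 2)%:C)%C) ->
        forall x : 'I_n,
          exists (alpha beta : R[i]) (u u' : qstate R ('I_N.+1 * 'I_K.+1)%type),
            sqnorm u = 1 /\ sqnorm u' = 1 /\
            run O alg (@init_state R n N K x) = @out_state R n N K x alpha beta u u' /\
            `|alpha| ^+ 2 =
              ((sin (M%:R * theta x) ^+ 2 / (M%:R ^+ 2 * sin (theta x) ^+ 2))%:C)%C.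
Proof.
exists 2 => R n N chi [//|M'] _.
exists M', (par_est_zero chi M'); split; first exact: par_est_zero_unitary.
split; first exact: nqueries_par_est_zero.
move=> O Psi theta O_unitary O_prepares theta_range weight_sin x.
apply: par_est_zero_correct => //; rewrite gt_eqF // sin_gt0_pi //.
by have /andP [theta_gt0 theta_le] := theta_range x; rewrite theta_gt0 /=; lra.
Qed.
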